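(* Let $q$ be an odd prime power, $f$ a planar function on $\mathbb F_{q^2}$, and $\theta\in\mathbb F_{q^2}^*$ such that for every $c\in\mathbb F_q$, $\#\{x\in\mathbb F_{q^2}:\phi(x)=c\}$ equals $q+1$ if $c\neq0$ and $1$ if $c=0$, where $\phi(x):=\theta_1f_0(x)-\theta_0f_1(x)$. Let $\mathscr C_\theta:=\{C_{a,\beta}:a\in\mathbb F_{q^2},\beta\in\mathbb F_q^*\}$ with $C_{a,\beta}:=\{x\in\mathbb F_{q^2}:\phi(x+a)=\beta\}$. Then $(\mathbb F_{q^2},\mathscr C_\theta)$ is a $(q^2,q+1,q)$-design, i.e.\ every element of $\mathscr C_\theta$ has $q+1$ elements and any two distinct elements of $\mathbb F_{q^2}$ lie in exactly $q$ members of $\mathscr C_\theta$.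
   Context: A function $f:\mathbb F_{q^2}\to\mathbb F_{q^2}$ is planar if for every $a\neq0$ the map $x\mapsto f(x+a)-f(x)$ is a bijection. A fixed $\xi\in\mathbb F_{q^2}\setminus\mathbb F_q$ is chosen; $\theta=\theta_0+\theta_1\xi$ and $f(x)=f_0(x)+f_1(x)\xi$ with $\theta_i\in\mathbb F_q$, $f_i(x)\in\mathbb F_q$. *)

From HB Require Import structures.
From mathcomp Require Import all_boot all_order all_algebra all_field.
Set Implicit Arguments. Unset Strict Implicit. Unset Printing Implicit Defensive.
Import GRing.Theory.
Local Open Scope ring_scope.

Definition planar (K : finFieldType) (f : K -> K) : Prop :=
  forall a : K, a != 0 -> bijective (fun x => f (x + a) - f x).

Definition phi_of (F K : finFieldType) (f0 f1 : K -> F) (t0 t1 : F) (x : K) : F :=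
  t1 * f0 x - t0 * f1 x.

Definition block (F K : finFieldType) (phi : K -> F) (a : K) (b : F) : {set K} :=
  [set x | phi (x + a) == b].

Definition blocks (F K : finFieldType) (phi : K -> F) : {set {set K}} :=
  [set block phi ab.1 ab.2 | ab in [set ab : K * F | ab.2 != 0]].

Definition is_design (K : finType) (B : {set {set K}}) (v k lam : nat) : Prop :=
  [/\ #|K| = v,
      (forall C, C \in B -> #|C| = k) &
      (forall x y : K, x != y -> #|[set C in B | (x \in C) && (y \in C)]| = lam)].

From HB Require Import structures.
From mathcomp Require Import all_boot all_order all_algebra all_field.
From mathcomp Require Import ring.
Import GRing.Theory.
Local Open Scope ring_scope.

(* Planarity makes z |-> (f0 (z + d) - f0 z, f1 (z + d) - f1 z) a bijection
   from F_{q^2} onto F_q^2 for every d != 0, so the difference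
   phi (z + d) - phi z, a nonzero linear form of that pair, takes every value
   exactly q times.  The blocks through x != y are then the C_{z - x, phi z}
   with phi (y - x + z) = phi z; these z number q, none has phi z = 0 because
   the zero level set of phi is a singleton, and they give distinct blocks
   because a level set of phi (q + 1 points) cannot sit inside a level set of
   a difference of phi (q points). *)

Lemma card_linear_form_eq (F : finFieldType) (t0 t1 c : F) :
  (t0 != 0) || (t1 != 0) ->
  #|[set u : F * F | t1 * u.1 - t0 * u.2 == c]| = #|F|.
Proof.
case/orP => ht.
- have -> : [set u : F * F | t1 * u.1 - t0 * u.2 == c] =
            (fun v => (v, (t1 * v - c) / t0)) @: [set: F].
    apply/setP => -[u1 u2]; rewrite inE; apply/eqP/imsetP => /=.
    + by move=> <-; exists u1; rewrite ?inE //; congr (_, _); field.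
    + by case=> v _ [-> ->]; field.
  by rewrite card_imset ?cardsT // => v w [].
- have -> : [set u : F * F | t1 * u.1 - t0 * u.2 == c] =
            (fun v => ((c + t0 * v) / t1, v)) @: [set: F].
    apply/setP => -[u1 u2]; rewrite inE; apply/eqP/imsetP => /=.
    + by move=> <-; exists u2; rewrite ?inE //; congr (_, _); field.
    + by case=> v _ [-> ->]; field.
  by rewrite card_imset ?cardsT // => v w [].
Qed.

Section PlanarDifference.

Context {F K : finFieldType} {iota : {rmorphism F -> K}} {xi : K}.
Context {f : K -> K} {f0 f1 : K -> F}.
Hypothesis hf : forall x, f x = iota (f0 x) + iota (f1 x) * xi.
Hypothesis hplanar : planar f.

Definition diff_pair (d z : K) : F * F := (f0 (z + d) - f0 z, f1 (z + d) - f1 z).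

Lemma diff_pair_inj (d : K) : d != 0 -> injective (diff_pair d).
Proof.
move=> hd z z' [e0 e1]; have [g gK _] := hplanar d hd.
rewrite -[z]gK -[z']gK; congr g; rewrite !hf.
rewrite opprD addrACA -!rmorphB e0 -mulrBl -rmorphB e1.
by rewrite opprD addrACA -!rmorphB -mulrBl -rmorphB.
Qed.

Lemma card_phi_diff_eq (t0 t1 c : F) (d : K) :
  #|K| = (#|F| * #|F|)%N -> (t0 != 0) || (t1 != 0) -> d != 0 ->
  #|[set z | phi_of f0 f1 t0 t1 (z + d) - phi_of f0 f1 t0 t1 z == c]| = #|F|.
Proof.
move=> hK ht hd; rewrite -(card_linear_form_eq _ _ _ c ht).
have hbij : bijective (diff_pair d).
  by apply: (inj_card_bij (diff_pair_inj d hd)); rewrite card_prod hK.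
rewrite -(on_card_preimset (onW_bij _ hbij)); apply: eq_card => z.
rewrite !inE /phi_of /=.
by congr (_ == c); ring.
Qed.

End PlanarDifference.

Section BalancedDesign.

Variables (F K : finFieldType) (phi : K -> F) (q : nat).
Hypothesis hdiff : forall (d : K) (c : F), d != 0 ->
  #|[set z | phi (z + d) - phi z == c]| = q.
Hypothesis hlevel : forall c : F, c != 0 -> #|[set z | phi z == c]| = q.+1.
Hypothesis hzero : #|[set z | phi z == 0]| = 1%N.

Lemma card_block (a : K) (b : F) : b != 0 -> #|block phi a b| = q.+1.
Proof.
move=> hb; rewrite -(hlevel _ hb) -[RHS](card_preimset _ (addIr a)).
by apply: eq_card => x; rewrite !inE.
Qed.

Lemma phi_zero_uniq (z z' : K) : phi z = 0 -> phi z' = 0 -> z = z'.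
Proof.
move=> hz hz'; have /eqP/cards1P [w hw] := hzero.
have mem_w u : phi u = 0 -> u = w by move=> hu; apply/set1P; rewrite -hw inE hu.
by rewrite (mem_w z hz) (mem_w z' hz').
Qed.

Lemma block_inj (a a' : K) (b b' : F) : b != 0 ->
  block phi a b = block phi a' b' -> a = a' /\ b = b'.
Proof.
move=> hb eB.
have mem_B z : phi z = b -> phi (z - a + a') = b'.
  move=> hz; have : z - a \in block phi a b by rewrite inE subrK hz.
  by rewrite eB inE => /eqP.
have [z hz] : exists z, phi z = b.
  have /card_gt0P [z] : (0 < #|[set z | phi z == b]|)%N by rewrite hlevel.
  by rewrite inE => /eqP; exists z.
case: (eqVneq a a') => [ea|ne]; first by split; rewrite // -(mem_B z hz) -ea subrK.
have hd : a' - a != 0 by rewrite subr_eq0 eq_sym.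
have : [set z | phi z == b] \subset [set z | phi (z + (a' - a)) - phi z == b' - b].
  apply/subsetP => u; rewrite !inE => /eqP hu.
  by rewrite addrA addrAC mem_B // hu.
by move/subset_leq_card; rewrite hlevel // hdiff // ltnn.
Qed.

Lemma phi_shift_eq_neq0 (d z : K) : d != 0 -> phi (z + d) = phi z -> phi z != 0.
Proof.
move=> hd e; apply/eqP => h0.
have zd : z + d = z by apply: phi_zero_uniq; rewrite ?e.
by move: hd; rewrite (canRL (addKr z) zd) addNr eqxx.
Qed.

Lemma card_blocks_through (x y : K) : x != y ->
  #|[set C in blocks phi | (x \in C) && (y \in C)]| = q.
Proof.
move=> hxy; set d := y - x.
have hd : d != 0 by rewrite subr_eq0 eq_sym.
have shiftE z : y + (z - x) = z + d by rewrite addrCA addrA.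
set Z := [set z | phi (z + d) - phi z == 0].
have Z_neq0 z : z \in Z -> phi z != 0.
  by rewrite inE subr_eq0 => /eqP; apply: phi_shift_eq_neq0.
(* C_{a,b} contains x and y iff z := x + a satisfies phi (z + d) = phi z = b *)
have -> : [set C in blocks phi | (x \in C) && (y \in C)] =
          (fun z => block phi (z - x) (phi z)) @: Z.
  apply/setP => C; rewrite inE; apply/andP/imsetP.
  - case=> /imsetP [[a b] _ ->] /andP [].
    rewrite !inE => /eqP hx /eqP hy; exists (x + a); last by rewrite addrC addKr hx.
    by rewrite inE addrAC [x + d]addrC subrK hy hx subrr.
  - case=> z zZ ->; split.
      by apply/imsetP; exists (z - x, phi z); rewrite // inE /= Z_neq0.
    move: zZ; rewrite !inE subr_eq0 shiftE => /eqP ->.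
    by rewrite addrC subrK !eqxx.
rewrite card_in_imset ?hdiff // => z z' zZ z'Z /block_inj [] // => [|e _].
  exact: Z_neq0.
by rewrite -(subrK x z) e subrK.
Qed.

Lemma balanced_phi_design : is_design (blocks phi) #|K| q.+1 q.
Proof.
split=> // [C /imsetP [[a b]] |]; last exact: card_blocks_through.
by rewrite inE /= => hb ->; apply: card_block.
Qed.

End BalancedDesign.

Theorem corollary3p6 (q : nat) (F K : finFieldType) (iota : {rmorphism F -> K})
  (hqF : #|F| = q) (hqodd : odd q) (hqK : #|K| = (q ^ 2)%N)
  (xi : K) (hxi : forall c : F, xi != iota c)
  (f : K -> K) (f0 f1 : K -> F)
  (hf : forall x, f x = iota (f0 x) + iota (f1 x) * xi)
  (hplanar : planar f)
  (theta : K) (theta0 theta1 : F)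
  (htheta : theta = iota theta0 + iota theta1 * xi) (htheta0 : theta != 0)
  (hcount : forall c : F,
     #|[set x : K | phi_of f0 f1 theta0 theta1 x == c]| =
       (if c != 0 then q.+1 else 1%N)) :
  is_design (blocks (phi_of f0 f1 theta0 theta1)) (q ^ 2) q.+1 q.
Proof.
have htheta01 : (theta0 != 0) || (theta1 != 0).
  apply: contraR htheta0; rewrite negb_or !negbK htheta => /andP [/eqP -> /eqP ->].
  by rewrite !rmorph0 mul0r addr0.
rewrite -hqK; apply: balanced_phi_design.
- move=> d c hd; rewrite -hqF.
  by apply: (card_phi_diff_eq hf hplanar); rewrite // hqK hqF.
- by move=> c hc; rewrite hcount hc.
- by rewrite hcount eqxx.
Qed.
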